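(* Let $\mathbf{C}\in\mathbb{R}^{n\times n}$ (discrete curl), $\tilde{\mathbf{S}}\in\mathbb{R}^{m\times n}$ (discrete divergence, $-\tilde{\mathbf{S}}^\top$ discrete gradient), $\mathbf{M}_\mu\in\mathbb{R}^{n\times n}$ symmetric positive definite, $\mathbf{M}_\rho\in\mathbb{R}^{n\times n}$, $\mathbf{P}\in\mathbb{R}^{n\times k}$ (reduced cotree projection of a tree-cotree gauge) and $\mathbf{Y}_\mathrm{s}\in\mathbb{R}^{n\times n_\mathrm{s}}$ (discrete winding function) satisfy: $\ker\tilde{\mathbf{S}}^\top=\{\mathbf{0}\}$; $\mathbf{C}\tilde{\mathbf{S}}^\top=\mathbf{0}$ and $\ker\tilde{\mathbf{S}}=\mathrm{im}\,\mathbf{C}^\top$; $\mathbf{K}_\rho=\mathbf{P}^\top\mathbf{C}^\top\mathbf{M}_\rho\mathbf{C}\mathbf{P}$ is nonsingular; and for all $\mathbf{x}\in\mathbb{R}^{n_\mathrm{s}}\setminus\{\mathbf{0}\}$, $\mathbf{y}\in\mathbb{R}^{k}\setminus\{\mathbf{0}\}$: $\mathbf{C}\mathbf{Y}_\mathrm{s}\mathbf{x}\neq\mathbf{0}$ and $\mathbf{C}\mathbf{Y}_\mathrm{s}\mathbf{x}\neq\mathbf{C}\mathbf{P}\mathbf{y}$. Then the gauged, spatially discretised T-$\Omega$ system with circuit coupling \begin{align*} \mathbf{K}_\rho\mathbf{t}_\mathrm{red}+\mathbf{P}^\top\mathbf{M}_\mu\big(\mathbf{P}\tfrac{\mathrm{d}}{\mathrm{d}t}\mathbf{t}_\mathrm{red}+\tilde{\mathbf{S}}^\top\tfrac{\mathrm{d}}{\mathrm{d}t}\Psi+\mathbf{Y}_\mathrm{s}\tfrac{\mathrm{d}}{\mathrm{d}t}\mathbf{i}_\mathrm{s}\big)&=0,\\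 \tilde{\mathbf{S}}\mathbf{M}_\mu\big(\mathbf{P}\mathbf{t}_\mathrm{red}+\tilde{\mathbf{S}}^\top\Psi+\mathbf{Y}_\mathrm{s}\mathbf{i}_\mathrm{s}\big)&=0,\\ \mathbf{Y}_\mathrm{s}^\top\mathbf{M}_\mu\big(\mathbf{P}\tfrac{\mathrm{d}}{\mathrm{d}t}\mathbf{t}_\mathrm{red}+\tilde{\mathbf{S}}^\top\tfrac{\mathrm{d}}{\mathrm{d}t}\Psi+\mathbf{Y}_\mathrm{s}\tfrac{\mathrm{d}}{\mathrm{d}t}\mathbf{i}_\mathrm{s}\big)-\mathbf{v}_\mathrm{s}&=0, \end{align*} with unknowns $\mathbf{x}_\lambda=(\mathbf{t}_\mathrm{red},\Psi)$, current $\mathbf{i}_\lambda=\mathbf{i}_\mathrm{s}$ and voltage $\mathbf{v}_\lambda=\mathbf{v}_\mathrm{s}$, is an inductance-like element.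
   Context: Positive definite means $\mathbf{x}^\top\mathbf{M}\mathbf{x}>0$ for $\mathbf{x}\ne0$. Inductance-like element: a device described by a DAE $\mathbf{F}(\frac{\mathrm{d}}{\mathrm{d}t}\mathbf{x}_\lambda,\frac{\mathrm{d}}{\mathrm{d}t}\mathbf{i}_\lambda,\mathbf{x}_\lambda,\mathbf{i}_\lambda,\mathbf{v}_\lambda,t)=0$ with $\mathbf{x}_\lambda:\mathcal{I}\to\mathbb{R}^{n_\mathrm{dof}}$, $\mathbf{i}_\lambda,\mathbf{v}_\lambda:\mathcal{I}\to\mathbb{R}^{n_\lambda}$, such that at most one differentiation $\frac{\mathrm{d}}{\mathrm{d}t}\mathbf{F}=0$ is needed to obtain from $\mathbf{F}=0$ and $\frac{\mathrm{d}}{\mathrm{d}t}\mathbf{F}=0$ (by algebraic manipulations) a system $\frac{\mathrm{d}}{\mathrm{d}t}\mathbf{x}_\lambda=\mathbf{f}_\mathbf{x}(\mathbf{x}_\lambda,\mathbf{i}_\lambda,\mathbf{v}_\lambda,t)$, $\frac{\mathrm{d}}{\mathrm{d}t}\phi(\mathbf{i}_\lambda,\mathbf{x}_\lambda,t)=\mathbf{f}_\phi(\mathbf{x}_\lambda,\mathbf{i}_\lambda,\mathbf{v}_\lambda,t)$, where $\partial\phi/\partial\mathbf{i}_\lambda$ is regular and $\frac{\partial}{\partial\mathbf{v}_\lambda}\Big((\frac{\partial\phi}{\partial\mathbf{i}_\lambda})^{-1}(-\frac{\partial\phi}{\partial\mathbf{x}_\lambda}\mathbf{f}_\mathbf{x}-\frac{\partial\phi}{\partial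 t}+\mathbf{f}_\phi)\Big)$ is positive definite. Here $\mathbf{t}_\mathrm{red}$ are the gauged degrees of freedom of the electric vector potential in the conducting region, $\Psi$ those of the magnetic scalar potential, $\mathbf{i}_\mathrm{s},\mathbf{v}_\mathrm{s}$ the coil currents and voltages. *)

From HB Require Import structures.
From mathcomp Require Import all_boot all_order all_algebra.
From mathcomp Require Import all_classical all_reals all_analysis.
Set Implicit Arguments. Unset Strict Implicit. Unset Printing Implicit Defensive.
Import Order.TTheory GRing.Theory Num.Theory.
Import numFieldNormedType.Exports.
Local Open Scope classical_set_scope.
Local Open Scope ring_scope.

(* Vectors are represented as row vectors 'rV_n (so that Frechet
   differentials 'd and their matrices lin1_mx can be used); the
   matrix of a linear map f on row vectors in the usual column
   convention is (lin1_mx f)^T. *)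

Section Defs.
Variable R : realType.

Definition posdefmx n (A : 'M[R]_n) : Prop :=
  forall x : 'cV[R]_n, x != 0 -> 0 < (x^T *m A *m x) 0 0.

(* A DAE F(d/dt x, d/dt i, x, i, v, t) = 0 with
   x : R^nd, i,v : R^nl, and ne scalar equations. *)
Definition dae_fun (nd nl ne : nat) :=
  'rV[R]_nd -> 'rV[R]_nl -> 'rV[R]_nd -> 'rV[R]_nl -> 'rV[R]_nl -> R -> 'rV[R]_ne.

Definition dphi_di nd nl (phi : 'rV[R]_nl -> 'rV[R]_nd -> R -> 'rV[R]_nl) i x t :=
  'd (fun j => phi j x t) i.
Definition dphi_dx nd nl (phi : 'rV[R]_nl -> 'rV[R]_nd -> R -> 'rV[R]_nl) i x t :=
  'd (fun y => phi i y t) x.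
Definition dphi_dt nd nl (phi : 'rV[R]_nl -> 'rV[R]_nd -> R -> 'rV[R]_nl) i x t :=
  'D_1 (fun s => phi i x s) t.

(* Inductance-like element on the time set I.
   "From F = 0 and d/dt F = 0 (one differentiation) one obtains by algebraic
   manipulations" is read as: at every point of the first/second order jet
   (x, i, v, t; x', i', v'; x'', i'') at which F = 0 and the total time
   derivative of F along the jet vanishes, the equations
     x' = f_x(x,i,v,t),   d/dt phi(i,x,t) = f_phi(x,i,v,t)
   hold, where d/dt phi(i,x,t) = dphi/di i' + dphi/dx x' + dphi/dt. *)
Definition inductance_like (nd nl ne : nat) (I : set R) (F : dae_fun nd nl ne) : Prop :=
  exists (fx : 'rV[R]_nd -> 'rV[R]_nl -> 'rV[R]_nl -> R -> 'rV[R]_nd)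
         (phi : 'rV[R]_nl -> 'rV[R]_nd -> R -> 'rV[R]_nl)
         (fphi : 'rV[R]_nd -> 'rV[R]_nl -> 'rV[R]_nl -> R -> 'rV[R]_nl),
  [/\
      (forall i x t, I t ->
         [/\ differentiable (fun j => phi j x t) i,
             differentiable (fun y => phi i y t) x &
             derivable (fun s => phi i x s) t 1]),
      (forall (x dx ddx : 'rV[R]_nd) (i v di dv ddi : 'rV[R]_nl) (t : R), I t ->
         F dx di x i v t = 0 ->
         is_derive (0 : R) (1 : R)
           (fun h : R => F (dx + h *: ddx) (di + h *: ddi) (x + h *: dx)
                           (i + h *: di) (v + h *: dv) (t + h)) 0 ->
         dx = fx x i v t /\
         dphi_di phi i x t di + dphi_dx phi i x t dx + dphi_dt phi i x t
           = fphi x i v t) &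
      (forall (x : 'rV[R]_nd) (i v : 'rV[R]_nl) (t : R), I t ->
         let J := (lin1_mx (dphi_di phi i x t))^T in
         let G := fun w : 'rV[R]_nl =>
           ((invmx J) *m (- (dphi_dx phi i x t (fx x i w t))^T
                          - (dphi_dt phi i x t)^T + (fphi x i w t)^T))^T in
         [/\ J \in unitmx, differentiable G v &
             posdefmx (lin1_mx ('d G v))^T])].

Definition TOmega_F n m k ns (C : 'M[R]_n) (St : 'M[R]_(m, n))
  (Mmu Mrho : 'M[R]_n) (P : 'M[R]_(n, k)) (Ys : 'M[R]_(n, ns))
  : dae_fun (k + m) ns (k + m + ns) :=
  fun dx di x i v _ =>
    let t := (lsubmx x)^T in let Psi := (rsubmx x)^T in
    let dt := (lsubmx dx)^T in let dPsi := (rsubmx dx)^T in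
    let Krho := P^T *m C^T *m Mrho *m C *m P in
    let e1 := Krho *m t + P^T *m Mmu *m (P *m dt + St^T *m dPsi + Ys *m di^T) in
    let e2 := St *m Mmu *m (P *m t + St^T *m Psi + Ys *m i^T) in
    let e3 := Ys^T *m Mmu *m (P *m dt + St^T *m dPsi + Ys *m di^T) - v^T in
    row_mx (row_mx e1^T e2^T) e3^T.

End Defs.

From HB Require Import structures.
From mathcomp Require Import all_boot all_order all_algebra.
From mathcomp Require Import all_classical all_reals all_analysis.
From mathcomp Require Import ring.
Import Order.TTheory GRing.Theory Num.Theory.
Import numFieldNormedType.Exports.
Local Open Scope classical_set_scope.
Local Open Scope ring_scope.
Set Implicit Arguments. Unset Strict Implicit. Unset Printing Implicit Defensive.

(* Write [B := (P | St^T | Ys)], so that [B (t, Psi, i)] is the magnetic field,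
   and [N := B^T Mmu B]. The first and third equations together with the time
   derivative of the second say exactly [N (t', Psi', i') = (- Krho t, 0, v)].
   [B] is injective: [C] kills the [St^T] block, so [B z = 0] gives
   [C P a + C Ys c = 0]; the winding-function hypotheses force [c = 0], then
   [Krho a = 0] forces [a = 0], and injectivity of [St^T] does the rest. Hence
   [N] is positive definite, the derivatives are [N^-1] times the right-hand
   side, and with the flux [phi(i, x, t) := i] the map [v |-> i'] is affine
   with matrix the lower-right block of [N^-1], positive definite as a
   principal block of a positive definite matrix. *)

Lemma unitmx_mulmx_inj (R : comUnitRingType) p q (A : 'M[R]_(q, p))
    (B : 'M[R]_(p, q)) (z : 'cV_q) :
  A *m B \in unitmx -> B *m z = 0 -> z = 0.
Proof. by move=> uAB Bz0; rewrite -(mulKmx uAB z) -mulmxA Bz0 !mulmx0. Qed.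

Lemma dsubmx_mulmx_col0 (R : pzSemiRingType) p q r (A : 'M[R]_(p + q, r + q))
    (u : 'cV[R]_q) :
  dsubmx (A *m col_mx 0 u) = drsubmx A *m u.
Proof. by rewrite -[A in A *m _]submxK mul_block_col !mulmx0 !add0r col_mxKd. Qed.

Section PositiveDefinite.
Variable R : realType.

Lemma posdefmx_unit n (A : 'M[R]_n) : posdefmx A -> A \in unitmx.
Proof.
move=> posA; rewrite -row_free_unit -kermx_eq0; apply/rowV0P => u.
move=> /sub_kermxP uA0; apply/eqP; apply: contraT => u_neq0.
have := posA u^T; rewrite trmx_eq0 trmxK uA0 mul0mx mxE ltxx.
by move/(_ u_neq0).
Qed.

Lemma posdefmx_congruence n p (M : 'M[R]_n) (B : 'M[R]_(n, p)) :
  posdefmx M -> (forall z : 'cV_p, B *m z = 0 -> z = 0) ->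
  posdefmx (B^T *m M *m B).
Proof.
move=> posM injB z z_neq0.
have Bz_neq0 : B *m z != 0 by apply: contra z_neq0 => /eqP/injB ->.
by have := posM _ Bz_neq0; rewrite trmx_mul !mulmxA.
Qed.

Lemma posdefmx_invmx n (A : 'M[R]_n) :
  A^T = A -> posdefmx A -> posdefmx (invmx A).
Proof.
move=> symA posA x x_neq0; have uA := posdefmx_unit posA.
have y_neq0 : invmx A *m x != 0.
  by apply: contra x_neq0 => /eqP y0; rewrite -(mulKVmx uA x) y0 mulmx0.
have := posA _ y_neq0.
by rewrite trmx_mul trmx_inv symA -!mulmxA mulKVmx // mulmxA.
Qed.

Lemma posdefmx_drsubmx p q (A : 'M[R]_(p + q)) :
  posdefmx A -> posdefmx (drsubmx A).
Proof.
move=> posA x x_neq0.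
have x0_neq0 : col_mx 0 x != 0 :> 'cV_(p + q) by rewrite col_mx_eq0 negb_and x_neq0 orbT.
have := posA _ x0_neq0.
rewrite -{1}[A]submxK tr_col_mx trmx0 mul_row_block !mul0mx !add0r mul_row_col.
by rewrite mulmx0 add0r.
Qed.

End PositiveDefinite.

Section Calculus.
Variable R : realType.

Lemma continuous_mulmxr n p (A : 'M[R]_(n, p)) :
  continuous (mulmxr A : 'rV_n -> 'rV_p).
Proof.
have -> : (mulmxr A : 'rV_n -> _) = \sum_(j < n) (fun w : 'rV[R]_n => w 0 j *: row j A).
  by apply: boolp.funext => w; rewrite fct_sumE /= mulmx_sum_row.
move=> x; apply: (@big_ind _ (fun f : 'rV[R]_n -> 'rV[R]_p => {for x, continuous f})).
- exact: cst_continuous.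
- by move=> f g; apply: continuousD.
- by move=> j _; apply: continuousZr_tmp; apply: coord_continuous.
Qed.

Global Instance is_diff_mulmxr n p (A : 'M[R]_(n, p)) (v : 'rV[R]_n) :
  is_diff v (mulmxr A : 'rV_n -> 'rV_p) (mulmxr A).
Proof.
apply: DiffDef; first exact/linear_differentiable/continuous_mulmxr.
by rewrite diff_lin //; apply: continuous_mulmxr.
Qed.

Lemma lin1_mx_mulmxr n p (A : 'M[R]_(n, p)) : lin1_mx (mulmxr A : 'rV_n -> 'rV_p) = A.
Proof. by apply/row_matrixP => i; rewrite !rowE mul_rV_lin1. Qed.

Lemma is_derive_line_eq (V : normedModType R) (c d df : V) :
  is_derive (0 : R) 1 (fun h : R => c + h *: d) df -> df = d.
Proof.
move=> dline; rewrite -(@derive_val _ _ _ _ _ _ _ dline).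
have -> : (fun h : R => c + h *: d) = cst c + ( *:%R^~ d) by [].
rewrite deriveD ?derive_cst ?add0r ?deriveE ?diff_val ?scale1r //.
exact/diff_derivable.
Qed.

Lemma inductance_like_affine_current nd nl ne (I : set R)
    (F : dae_fun R nd nl ne) (fx : 'rV_nd -> 'rV_nl -> 'rV_nl -> R -> 'rV_nd)
    (c : 'rV_nd -> 'rV_nl -> R -> 'rV_nl) (Q : 'M[R]_nl) :
  posdefmx Q ->
  (forall (x dx ddx : 'rV_nd) (i v di dv ddi : 'rV_nl) (t : R), I t ->
     F dx di x i v t = 0 ->
     is_derive (0 : R) (1 : R)
       (fun h : R => F (dx + h *: ddx) (di + h *: ddi) (x + h *: dx)
                       (i + h *: di) (v + h *: dv) (t + h)) 0 ->
     dx = fx x i v t /\ di = c x i t + v *m Q^T) ->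
  inductance_like I F.
Proof.
move=> posQ reduced.
exists fx, (fun i _ _ => i), (fun x i v t => c x i t + v *m Q^T).
have dphi_diE i (x : 'rV_nd) t : dphi_di (fun i _ _ => i) i x t = id :> ('rV_nl -> _).
  by rewrite /dphi_di diff_val.
have dphi_dxE i (x : 'rV_nd) t :
    dphi_dx (fun i _ _ => i) i x t = 0 :> ('rV_nd -> 'rV_nl).
  by rewrite /dphi_dx diff_cst.
have dphi_dtE i (x : 'rV_nd) t : dphi_dt (fun i _ _ => i) i x t = 0.
  by rewrite /dphi_dt derive_cst.
split.
- by move=> i x t _; split; last exact: derivable_cst.
- move=> x dx ddx i v di dv ddi t It F0 dF.
  have [-> ->] := reduced _ _ _ _ _ _ _ _ _ It F0 dF.
  by rewrite dphi_diE dphi_dxE dphi_dtE !addr0.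
- move=> x i v t _ J G.
  have J1 : J = 1%:M.
    rewrite /J dphi_diE; apply/matrixP => j l.
    by rewrite !mxE eqxx eq_sym.
  have G_affine : G = cst (c x i t) + mulmxr Q^T.
    apply: boolp.funext => w; rewrite /G J1 invmx1 mul1mx dphi_dxE dphi_dtE.
    by rewrite !trmx0 !oppr0 !add0r trmxK.
  split; [by rewrite J1 unitmx1 | by rewrite G_affine |].
  by rewrite G_affine diff_val /= add0r lin1_mx_mulmxr trmxK.
Qed.

End Calculus.

Section TOmega.
Variables (R : realType) (n m k ns : nat).
Variables (C : 'M[R]_n) (St : 'M[R]_(m, n)) (Mmu Mrho : 'M[R]_n).
Variables (P : 'M[R]_(n, k)) (Ys : 'M[R]_(n, ns)).

Local Notation Krho := (P^T *m C^T *m Mrho *m C *m P).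
Local Notation F := (TOmega_F C St Mmu Mrho P Ys).

Definition TOmega_field_mx : 'M[R]_(n, k + m + ns) := row_mx (row_mx P St^T) Ys.
Local Notation B := TOmega_field_mx.

Definition TOmega_energy_mx := B^T *m Mmu *m B.
Local Notation N := TOmega_energy_mx.

Lemma TOmega_energy_mx_sym : Mmu^T = Mmu -> N^T = N.
Proof. by move=> symMmu; rewrite /N !trmx_mul trmxK symMmu mulmxA. Qed.

Definition TOmega_rhs (x : 'rV[R]_(k + m)) (v : 'rV[R]_ns) : 'cV[R]_(k + m + ns) :=
  col_mx (col_mx (- (Krho *m (lsubmx x)^T)) 0) v^T.

Lemma TOmega_F_jet (dx ddx x : 'rV[R]_(k + m)) (di ddi i v dv : 'rV[R]_ns) (s t h : R) :
  F (dx + h *: ddx) (di + h *: ddi) (x + h *: dx) (i + h *: di) (v + h *: dv) s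
  = F dx di x i v t + h *: F ddx ddi dx di dv t.
Proof.
rewrite /TOmega_F /= !(linearD, linearZ) /= !scale_row_mx !add_row_mx.
by congr (row_mx (row_mx _ _) _); apply/matrixP => p q; rewrite !mxE; ring.
Qed.

Hypothesis St_tr_inj : forall y : 'cV[R]_m, St^T *m y = 0 -> y = 0.
Hypothesis C_St_tr : C *m St^T = 0.
Hypothesis Krho_unit : Krho \in unitmx.
Hypothesis CYs_inj : forall x : 'cV[R]_ns, x != 0 -> C *m Ys *m x != 0.
Hypothesis CYs_CP : forall (x : 'cV[R]_ns) (y : 'cV[R]_k), x != 0 -> y != 0 ->
  C *m Ys *m x != C *m P *m y.

Lemma TOmega_field_mx_inj (z : 'cV[R]_(k + m + ns)) : B *m z = 0 -> z = 0.
Proof.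
rewrite -[z]vsubmxK -[usubmx z]vsubmxK !mul_row_col.
set a := usubmx (usubmx z); set b := dsubmx (usubmx z); set c := dsubmx z.
move=> Bz0.
have CBz0 : C *m P *m a + C *m Ys *m c = 0.
  have := congr1 (mulmx C) Bz0.
  by rewrite !mulmxDr !mulmxA C_St_tr mul0mx addr0 mulmx0.
have c0 : c = 0.
  apply/eqP; apply: contraT => c_neq0.
  have [a0 | a_neq0] := eqVneq a 0.
    by move/eqP: CBz0; rewrite a0 mulmx0 add0r (negbTE (CYs_inj c_neq0)).
  have := CYs_CP c_neq0 (_ : - a != 0); rewrite oppr_eq0 mulmxN => /(_ a_neq0).
  by move/eqP: CBz0; rewrite addrC addr_eq0 => /eqP ->; rewrite eqxx.
have a0 : a = 0.
  apply: (@unitmx_mulmx_inj _ _ _ (P^T *m C^T *m Mrho) (C *m P)).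
    by rewrite !mulmxA.
  by move: CBz0; rewrite c0 mulmx0 addr0.
have b0 : b = 0 by apply: St_tr_inj; move: Bz0; rewrite a0 c0 !mulmx0 addr0 add0r.
by rewrite a0 b0 c0 !col_mx0.
Qed.

Lemma TOmega_jet_solve (x dx ddx : 'rV[R]_(k + m)) (i v di dv ddi : 'rV[R]_ns) (t : R) :
  F dx di x i v t = 0 -> F ddx ddi dx di dv t = 0 ->
  N *m col_mx dx^T di^T = TOmega_rhs x v.
Proof.
move=> /eqP + /eqP; rewrite !row_mx_eq0 !trmx_eq0.
move=> /andP [/andP [/eqP e1 _] /eqP e3] /andP [/andP [_ /eqP e2] _].
set w := P *m (lsubmx dx)^T + St^T *m (rsubmx dx)^T + Ys *m di^T in e1 e2 e3.
have Bw : B *m col_mx dx^T di^T = w.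
  by rewrite /B -[dx in col_mx dx^T _]hsubmxK tr_row_mx !mul_row_col.
rewrite /N -mulmxA Bw /B !tr_row_mx trmxK !mul_col_mx /TOmega_rhs.
congr (col_mx (col_mx _ _) _).
- by apply/eqP; rewrite -addr_eq0 addrC; apply/eqP.
- exact: e2.
- by apply/eqP; rewrite -subr_eq0; apply/eqP.
Qed.

Definition TOmega_solution x v := invmx N *m TOmega_rhs x v.

Lemma TOmega_jet_reduced (x dx ddx : 'rV[R]_(k + m)) (i v di dv ddi : 'rV[R]_ns) (t : R) :
  N \in unitmx -> F dx di x i v t = 0 ->
  is_derive (0 : R) (1 : R)
    (fun h : R => F (dx + h *: ddx) (di + h *: ddi) (x + h *: dx)
                    (i + h *: di) (v + h *: dv) (t + h)) 0 ->
  dx = (usubmx (TOmega_solution x v))^T /\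
  di = (dsubmx (TOmega_solution x 0))^T + v *m (drsubmx (invmx N))^T.
Proof.
move=> unitN F0 dF.
have dF0 : F ddx ddi dx di dv t = 0.
  move: dF; rewrite (boolp.funext (fun h =>
    TOmega_F_jet dx ddx x di ddi i v dv (t + h) t h)).
  by move/is_derive_line_eq.
have sol : col_mx dx^T di^T = TOmega_solution x v.
  by rewrite /TOmega_solution -(TOmega_jet_solve F0 dF0) mulKmx.
have rhs_affine : TOmega_rhs x v = TOmega_rhs x 0 + col_mx 0 v^T.
  by rewrite /TOmega_rhs add_col_mx trmx0 !addr0 add0r.
split; first by rewrite -[dx]trmxK -(col_mxKu dx^T di^T) sol.
rewrite -[di]trmxK -(col_mxKd dx^T di^T) sol /TOmega_solution rhs_affine.
by rewrite mulmxDr linearD /= dsubmx_mulmx_col0 linearD /= trmx_mul trmxK.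
Qed.

End TOmega.

Theorem proposition6 (R : realType) (n m k ns : nat)
  (C : 'M[R]_n) (St : 'M[R]_(m, n)) (Mmu Mrho : 'M[R]_n)
  (P : 'M[R]_(n, k)) (Ys : 'M[R]_(n, ns)) (I : set R) :
  Mmu^T = Mmu -> posdefmx Mmu ->
  (forall y : 'cV[R]_m, St^T *m y = 0 -> y = 0) ->
  C *m St^T = 0 ->
  (forall z : 'cV[R]_n, St *m z = 0 <-> exists w : 'cV[R]_n, z = C^T *m w) ->
  P^T *m C^T *m Mrho *m C *m P \in unitmx ->
  (forall x : 'cV[R]_ns, x != 0 -> C *m Ys *m x != 0) ->
  (forall (x : 'cV[R]_ns) (y : 'cV[R]_k), x != 0 -> y != 0 ->
     C *m Ys *m x != C *m P *m y) ->
  inductance_like I (TOmega_F C St Mmu Mrho P Ys).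
Proof.
move=> symMmu posMmu St_tr_inj C_St_tr _ Krho_unit CYs_inj CYs_CP.
have posN : posdefmx (TOmega_energy_mx St Mmu P Ys).
  apply: posdefmx_congruence posMmu _ => z.
  exact: TOmega_field_mx_inj St_tr_inj C_St_tr Krho_unit CYs_inj CYs_CP z.
have posQ := posdefmx_drsubmx (posdefmx_invmx (TOmega_energy_mx_sym St P Ys symMmu) posN).
apply: inductance_like_affine_current posQ _ => x dx ddx i v di dv ddi t _ F0 dF.
exact: TOmega_jet_reduced (posdefmx_unit posN) F0 dF.
Qed.
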